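(* Consider the four-oscillator system below with $\alpha_\mathrm{s}=\alpha_\mathrm{n}=\frac{\pi}{2}$ or $\alpha_\mathrm{s}=\alpha_\mathrm{n}=-\frac{\pi}{2}$, and arbitrary $A\in\mathbb{R}$, $\omega\in\mathbb{R}$. Then $$H(\psi_1,\psi_3)=\sin\!\left(\frac{\psi_1}{2}\right)\sin\!\left(\frac{\psi_3}{2}\right)$$ (with $\psi_1,\psi_3$ the real-valued phase differences of a solution) is constant along every solution.
   Context: Network of $M=2$ populations of $N=2$ phase oscillators with phases $\theta_{\sigma,k}(t)\in\mathbb{R}$ (population $\sigma\in\{1,2\}$, oscillator $k\in\{1,2\}$), evolving by $$\dot\theta_{\sigma,k}=\omega+\frac{K_\mathrm{s}}{4}\sum_{j=1}^{2}\sin(\theta_{\sigma,j}-\theta_{\sigma,k}-\alpha_\mathrm{s})+\frac{K_\mathrm{n}}{4}\sum_{j=1}^{2}\sin(\theta_{\tau,j}-\theta_{\sigma,k}-\alpha_\mathrm{n}),$$ where $\tau$ denotes the population other than $\sigma$, $\omega\in\mathbb{R}$, $\alpha_\mathrm{s},\alpha_\mathrm{n}\in\mathbb{R}$ are phase lags, and the coupling strengths are parametrized by $A\in\mathbb{R}$ via $K_\mathrm{s}=(1+A)/2$, $K_\mathrm{n}=(1-A)/2$ (so $K_\mathrm{s}+K_\mathrm{n}=1$, $A=K_\mathrm{s}-K_\mathrm{n}$). The phase differences are $\psi_1=\theta_{1,1}-\theta_{1,2}$, $\psi_2=\theta_{1,2}-\theta_{2,1}$, $\psi_3=\theta_{2,1}-\theta_{2,2}$;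 they satisfy an autonomous ODE (the reduced system) since the right-hand side depends only on phase differences. *)

From Stdlib Require Import Reals.
From Coquelicot Require Import Coquelicot.
Open Scope R_scope.

(* Right-hand side for oscillator with phase [self]; [own1 own2] are the phases
   of its own population, [oth1 oth2] those of the other population. *)
Definition osc_rhs (om Ks Kn als aln : R) (own1 own2 oth1 oth2 self : R) : R :=
  om + Ks / 4 * (sin (own1 - self - als) + sin (own2 - self - als))
     + Kn / 4 * (sin (oth1 - self - aln) + sin (oth2 - self - aln)).

Definition K_s (A : R) : R := (1 + A) / 2.
Definition K_n (A : R) : R := (1 - A) / 2.

Definition is_solution (A om als aln : R) (a b : Rbar)
    (th11 th12 th21 th22 : R -> R) : Prop :=
  forall t : R, Rbar_lt a t -> Rbar_lt t b ->
    let Ks := K_s A in let Kn := K_n A in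
    is_derive th11 t (osc_rhs om Ks Kn als aln (th11 t) (th12 t) (th21 t) (th22 t) (th11 t)) /\
    is_derive th12 t (osc_rhs om Ks Kn als aln (th11 t) (th12 t) (th21 t) (th22 t) (th12 t)) /\
    is_derive th21 t (osc_rhs om Ks Kn als aln (th21 t) (th22 t) (th11 t) (th12 t) (th21 t)) /\
    is_derive th22 t (osc_rhs om Ks Kn als aln (th21 t) (th22 t) (th11 t) (th12 t) (th22 t)).

Definition H (psi1 psi3 : R) : R := sin (psi1 / 2) * sin (psi3 / 2).

(* With both phase lags equal to ±π/2 every coupling term becomes ±cos of a
   phase difference.  Since cos is even, the intra-population terms drop out of
   ψ1' and ψ3', which are then ±K_n/4 times differences of cosines of the
   cross-population differences.  Sum-to-product formulas show that the two
   contributions to d/dt [sin(ψ1/2) sin(ψ3/2)] are opposite, so H has zero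
   derivative and, by the mean value theorem, is constant. *)
From Stdlib Require Import Reals.
From Coquelicot Require Import Coquelicot.
Open Scope R_scope.

Lemma sin_sub_pm_PI2 (alpha : R) :
  alpha = PI / 2 \/ alpha = - (PI / 2) ->
  exists e, forall z, sin (z - alpha) = e * cos z.
Proof.
  intros [-> | ->].
  - exists (-1); intro z. rewrite sin_minus, sin_PI2, cos_PI2. ring.
  - exists 1; intro z. replace (z - - (PI / 2)) with (z + PI / 2) by ring.
    rewrite sin_plus, sin_PI2, cos_PI2. ring.
Qed.

Lemma osc_rhs_sub_own (om Ks Kn alpha e x y u v : R) :
  (forall z, sin (z - alpha) = e * cos z) ->
  osc_rhs om Ks Kn alpha alpha x y u v x - osc_rhs om Ks Kn alpha alpha x y u v y
  = e * Kn / 4 * (cos (u - x) + cos (v - x) - (cos (u - y) + cos (v - y))).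
Proof.
  intro Halpha. unfold osc_rhs. rewrite !Halpha, !Rminus_diag.
  replace (y - x) with (- (x - y)) by ring. rewrite cos_neg. field.
Qed.

Lemma cos_sub_cos_twice (r p q : R) :
  cos (2 * r - 2 * p) - cos (2 * r - 2 * q) = 2 * sin (p - q) * sin (2 * r - p - q).
Proof.
  rewrite form2.
  replace ((2 * r - 2 * p - (2 * r - 2 * q)) / 2) with (- (p - q)) by field.
  replace ((2 * r - 2 * p + (2 * r - 2 * q)) / 2) with (2 * r - p - q) by field.
  rewrite sin_neg. ring.
Qed.

Lemma sin_add_sin_twice (r s p q : R) :
  sin (2 * r - p - q) + sin (2 * s - p - q)
  = 2 * cos (r - s) * sin (r + s - p - q).
Proof.
  rewrite form3.
  replace ((2 * r - p - q - (2 * s - p - q)) / 2) with (r - s) by field.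
  replace ((2 * r - p - q + (2 * s - p - q)) / 2) with (r + s - p - q) by field.
  ring.
Qed.

(* Writing x = 2p, y = 2q, u = 2r, v = 2s, the sum-to-product formulas turn the
   two summands into -/+ 4 sin(p-q) cos(p-q) sin(r-s) cos(r-s) sin(p+q-r-s). *)
Lemma cross_coupling_cancel (x y u v : R) :
  cos ((x - y) / 2) * sin ((u - v) / 2) *
    (cos (u - x) + cos (v - x) - (cos (u - y) + cos (v - y)))
  + sin ((x - y) / 2) * cos ((u - v) / 2) *
    (cos (x - u) + cos (y - u) - (cos (x - v) + cos (y - v))) = 0.
Proof.
  set (p := x / 2); set (q := y / 2); set (r := u / 2); set (s := v / 2).
  replace x with (2 * p) by (unfold p; field).
  replace y with (2 * q) by (unfold q; field).
  replace u with (2 * r) by (unfold r; field).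
  replace v with (2 * s) by (unfold s; field).
  replace ((2 * p - 2 * q) / 2) with (p - q) by field.
  replace ((2 * r - 2 * s) / 2) with (r - s) by field.
  replace (cos (2 * r - 2 * p) + cos (2 * s - 2 * p)
           - (cos (2 * r - 2 * q) + cos (2 * s - 2 * q)))
    with ((cos (2 * r - 2 * p) - cos (2 * r - 2 * q))
          + (cos (2 * s - 2 * p) - cos (2 * s - 2 * q))) by ring.
  replace (cos (2 * p - 2 * r) + cos (2 * q - 2 * r)
           - (cos (2 * p - 2 * s) + cos (2 * q - 2 * s)))
    with ((cos (2 * p - 2 * r) - cos (2 * p - 2 * s))
          + (cos (2 * q - 2 * r) - cos (2 * q - 2 * s))) by ring.
  rewrite !cos_sub_cos_twice.
  replace (2 * sin (p - q) * sin (2 * r - p - q) + 2 * sin (p - q) * sin (2 * s - p - q))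
    with (2 * sin (p - q) * (sin (2 * r - p - q) + sin (2 * s - p - q))) by ring.
  replace (2 * sin (r - s) * sin (2 * p - r - s) + 2 * sin (r - s) * sin (2 * q - r - s))
    with (2 * sin (r - s) * (sin (2 * p - r - s) + sin (2 * q - r - s))) by ring.
  rewrite !sin_add_sin_twice.
  replace (r + s - p - q) with (- (p + q - r - s)) by ring.
  rewrite sin_neg. ring.
Qed.

Lemma is_derive_sin_half (f : R -> R) (t df : R) :
  is_derive f t df -> is_derive (fun s => sin (f s / 2)) t (cos (f t / 2) * (df / 2)).
Proof.
  intro Hf.
  assert (Hhalf : is_derive (fun s => f s / 2) t (df / 2)).
  { apply (is_derive_ext (fun s => scal (/ 2) (f s))).
    - intro s. unfold scal; simpl; unfold mult; simpl. field.
    - replace (df / 2) with (scal (/ 2) df)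
        by (unfold scal; simpl; unfold mult; simpl; field).
      now apply is_derive_scal. }
  rewrite Rmult_comm. exact (is_derive_comp sin _ t _ _ (is_derive_sin _) Hhalf).
Qed.

Lemma is_derive_H_sub (f1 f2 g1 g2 : R -> R) (t df1 df2 dg1 dg2 : R) :
  is_derive f1 t df1 -> is_derive f2 t df2 ->
  is_derive g1 t dg1 -> is_derive g2 t dg2 ->
  is_derive (fun s => H (f1 s - f2 s) (g1 s - g2 s)) t
    ((cos ((f1 t - f2 t) / 2) * sin ((g1 t - g2 t) / 2) * (df1 - df2)
      + sin ((f1 t - f2 t) / 2) * cos ((g1 t - g2 t) / 2) * (dg1 - dg2)) / 2).
Proof.
  intros D1 D2 E1 E2.
  pose proof (is_derive_sin_half _ _ _ (is_derive_minus _ _ _ _ _ D1 D2)) as Df.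
  pose proof (is_derive_sin_half _ _ _ (is_derive_minus _ _ _ _ _ E1 E2)) as Dg.
  pose proof (is_derive_mult _ _ _ _ _ Df Dg (fun _ _ => Rmult_comm _ _)) as DH.
  unfold minus, plus, opp, mult in DH; simpl in DH. unfold H.
  replace ((cos ((f1 t - f2 t) / 2) * sin ((g1 t - g2 t) / 2) * (df1 - df2)
      + sin ((f1 t - f2 t) / 2) * cos ((g1 t - g2 t) / 2) * (dg1 - dg2)) / 2)
    with (cos ((f1 t + - f2 t) / 2) * ((df1 + - df2) / 2) * sin ((g1 t + - g2 t) / 2)
      + sin ((f1 t + - f2 t) / 2) * (cos ((g1 t + - g2 t) / 2) * ((dg1 + - dg2) / 2)))
    by (unfold Rminus; field).
  exact DH.
Qed.

Lemma is_derive_H_solution (alpha A om : R) (a b : Rbar) (th11 th12 th21 th22 : R -> R)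
    (t : R) :
  alpha = PI / 2 \/ alpha = - (PI / 2) ->
  is_solution A om alpha alpha a b th11 th12 th21 th22 ->
  Rbar_lt a t -> Rbar_lt t b ->
  is_derive (fun s => H (th11 s - th12 s) (th21 s - th22 s)) t 0.
Proof.
  intros Halpha Hsol Hat Htb.
  destruct (sin_sub_pm_PI2 alpha Halpha) as [e He].
  destruct (Hsol t Hat Htb) as [D11 [D12 [D21 D22]]].
  pose proof (is_derive_H_sub _ _ _ _ _ _ _ _ _ D11 D12 D21 D22) as DH.
  rewrite !(osc_rhs_sub_own _ _ _ _ e) in DH by exact He.
  pose proof (cross_coupling_cancel (th11 t) (th12 t) (th21 t) (th22 t)) as Hcancel.
  replace 0 with (e * K_n A / 4 * 0 / 2) by field.
  rewrite <- Hcancel.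
  match type of DH with is_derive _ _ ?d => replace (_ / 2) with d by field end.
  exact DH.
Qed.

Lemma is_derive_0_eq_Rbar (f : R -> R) (a b : Rbar) (t1 t2 : R) :
  (forall t : R, Rbar_lt a t -> Rbar_lt t b -> is_derive f t 0) ->
  Rbar_lt a t1 -> Rbar_lt t1 b -> Rbar_lt a t2 -> Rbar_lt t2 b ->
  f t1 = f t2.
Proof.
  intros Hd Ha1 Hb1 Ha2 Hb2.
  assert (Hseg : forall s1 s2 : R, Rbar_lt a s1 -> Rbar_lt s2 b -> s1 < s2 -> f s1 = f s2).
  { intros s1 s2 Has1 Hs2b Hlt. apply eq_is_derive; [| exact Hlt].
    intros s [Hs1 Hs2].
    exact (Hd s (Rbar_lt_le_trans a s1 s Has1 Hs1) (Rbar_le_lt_trans s s2 b Hs2 Hs2b)). }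
  destruct (Rtotal_order t1 t2) as [Hlt | [-> | Hgt]].
  - now apply Hseg.
  - reflexivity.
  - symmetry. now apply Hseg.
Qed.

Theorem mainTheorem4 (alpha A om : R) (a b : Rbar) (th11 th12 th21 th22 : R -> R) :
  (alpha = PI / 2 \/ alpha = - (PI / 2)) ->
  is_solution A om alpha alpha a b th11 th12 th21 th22 ->
  forall t1 t2 : R, Rbar_lt a t1 -> Rbar_lt t1 b -> Rbar_lt a t2 -> Rbar_lt t2 b ->
    H (th11 t1 - th12 t1) (th21 t1 - th22 t1) =
    H (th11 t2 - th12 t2) (th21 t2 - th22 t2).
Proof.
  intros Halpha Hsol t1 t2.
  apply (is_derive_0_eq_Rbar (fun s => H (th11 s - th12 s) (th21 s - th22 s)) a b).
  intros t Hat Htb. exact (is_derive_H_solution alpha A om a b _ _ _ _ t Halpha Hsol Hat Htb).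
Qed.
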